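(* Let $\varphi\colon\Gamma\to K$ be a surjective homomorphism of discrete groups with kernel $H$. Then the following are equivalent: (1) for every normed $\mathbb{R}[\Gamma]$-module $V$, the inflation map $H^\bullet_b(\varphi;\mathrm{I}_V)\colon H^\bullet_b(K;V^H)\to H^\bullet_b(\Gamma;V)$ is an isometric isomorphism in all degrees; (2) for every Banach $\Gamma$-module $V$, the inflation map $H^1_b(\varphi;\mathrm{I}_V)\colon H^1_b(K;V^H)\to H^1_b(\Gamma;V)$ is an isomorphism; (3) $H$ is finite.
   Context: A normed $\mathbb{R}[\Gamma]$-module is a normed real vector space with an action of $\Gamma$ by $\mathbb{R}$-linear isometries; a Banach $\Gamma$-module is a complete one. The bounded cohomology $H^\bullet_b(\Gamma;V)$ is the cohomology of the complex $C^\bullet_b(\Gamma;V)^\Gamma$ of $\Gamma$-invariant bounded functions $\Gamma^{\bullet+1}\to V$ (with $\Gamma$ acting by $(g\cdot f)(g_0,\dots,g_\bullet)=g f(g^{-1}g_0,\dots,g^{-1}g_\bullet)$ and the usual homogeneous coboundary), endowed with the seminorm induced by the $\ell^\infty$-norm; ''isometric'' means preserving this seminorm. For $H=\ker\varphi$, the $H$-fixed subspace $V^H$ is a normed $\mathbb{R}[K]$-module, and the inflation map $H^\bullet_b(\varphi;\mathrm{I}_V)$ is induced by restriction along $\varphi$ together with the inclusion $\mathrm{I}_V\colon V^H\to V$. *)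

From HB Require Import structures.
From mathcomp Require Import all_boot all_order all_algebra.
From mathcomp Require Import all_classical all_reals all_analysis.
From mathcomp Require Import Rstruct Rstruct_topology.
Unset Printing Implicit Defensive.
Import Order.TTheory GRing.Theory Num.Theory.
Local Open Scope ring_scope.
Local Open Scope classical_set_scope.

Notation RR := Rdefinitions.R.

(* A normed R[G]-module structure on the normed real vector space V:
   an action of G on V by R-linear isometries. *)
Definition normed_action (G : groupType) (V : normedModType RR)
    (a : G -> V -> V) : Prop :=
  [/\ forall v, a 1%g v = v,
      forall g h v, a (g * h)%g v = a g (a h v),
      forall g (r : RR) u v, a g (r *: u + v) = r *: a g u + a g v
    & forall g v, `|a g v| = `|v| ].

Arguments normed_action {G V}.

Section BoundedCohomology.
(* Bounded cochains of the group G with values in the normed space V,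
   on which G acts by [a]; the values are required to lie in the
   (sub)module [S] (S = setT for V itself, S = V^H for fixed points). *)
Variables (G : groupType) (V : normedModType RR) (a : G -> V -> V) (S : set V).
Implicit Types n : nat.

(* homogeneous n-cochains: functions G^{n+1} -> V *)
Definition cochain (n : nat) := ('I_n.+1 -> G) -> V.

Definition face n (i : 'I_n.+2) (x : 'I_n.+2 -> G) : 'I_n.+1 -> G :=
  fun j => x (lift i j).

Definition coboundary n (f : cochain n) : cochain n.+1 :=
  fun x => \sum_(i < n.+2) ((-1) ^+ i : RR) *: f (face n i x).

Definition bounded_cochain n (f : cochain n) : Prop :=
  exists M : RR, forall x, `|f x| <= M.

Definition invariant_cochain n (f : cochain n) : Prop :=
  forall g x, a g (f (fun i => (g^-1 * x i)%g)) = f x.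

Definition Cb n : set (cochain n) :=
  [set f | [/\ bounded_cochain n f, invariant_cochain n f & forall x, S (f x)]].

Definition Zb n : set (cochain n) :=
  [set f | Cb n f /\ forall x, coboundary n f x = 0].

Definition Bb (n : nat) : set (cochain n) :=
  match n return set (cochain n) with
  | 0 => [set f | forall x, f x = 0]
  | m.+1 => [set f | exists b, Cb m b /\ forall x, f x = coboundary m b x]
  end.

Definition supnorm n (f : cochain n) : RR := sup (range (fun x => `|f x|)).

Definition hb_seminorm n (f : cochain n) : RR :=
  inf [set supnorm n f' | f' in [set f' | Zb n f' /\ Bb n (fun x => f' x - f x)]].

End BoundedCohomology.

Arguments face {G n}.
Arguments coboundary {G V n}.
Arguments bounded_cochain {G V n}.
Arguments invariant_cochain {G V} a {n}.
Arguments Cb {G V} a S n.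
Arguments Zb {G V} a S n.
Arguments Bb {G V} a S n.
Arguments supnorm {G V n}.
Arguments hb_seminorm {G V} a S {n}.

Section Inflation.
Variables (Gam K : groupType) (phi : Gam -> K).
Variables (V : normedModType RR) (a : Gam -> V -> V).

Definition kerH : set Gam := [set h | phi h = 1%g].
Definition fixedH : set V := [set v | forall h, kerH h -> a h v = v].

(* the induced action of K on V^H: k . v := g . v for any g with phi g = k *)
Definition actK (k : K) (v : V) : V := a (xget 1%g [set g | phi g = k]) v.

(* inflation on cochains: restriction along phi composed with I_V : V^H -> V *)
Definition inflation (n : nat) (f : cochain K V n) : cochain Gam V n :=
  fun x => f (fun i => phi (x i)).

(* The map H^n_b(phi; I_V) : H^n_b(K; V^H) -> H^n_b(Gam; V) induced by
   [inflation] on classes is bijective. *)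
Definition inflation_iso (n : nat) : Prop :=
  (forall f, Zb actK fixedH n f ->
     Bb a setT n (inflation n f) -> Bb actK fixedH n f) /\
  (forall c, Zb a setT n c ->
     exists2 f, Zb actK fixedH n f &
                Bb a setT n (fun x => c x - inflation n f x)).

Definition inflation_isometric (n : nat) : Prop :=
  forall f, Zb actK fixedH n f ->
    hb_seminorm a setT (inflation n f) = hb_seminorm actK fixedH f.

End Inflation.

Arguments kerH {Gam K}.
Arguments fixedH {Gam K} phi {V}.
Arguments actK {Gam K} phi {V}.
Arguments inflation {Gam K} phi {V n}.
Arguments inflation_iso {Gam K} phi {V} a n.
Arguments inflation_isometric {Gam K} phi {V} a n.


(* H finite.  Averaging a cochain over H^{n+1} in each variable (right
   translation) gives an operator P that commutes with the coboundary,
   preserves invariance and does not increase the sup norm; P f has values in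
   V^H and depends only on phi.  Composing with a set-theoretic section of phi
   yields a cochain map [descend] back to K, left inverse to inflation, with
   inflation (descend f) = P f.  The prism decomposition of Delta^n x Delta^1,
   averaged over H, is a homotopy between the identity and P on cocycles, so
   inflation is bijective on cohomology; descent does not increase norms, so
   the seminorms agree.

   H infinite.  On the Banach module l^1_0(Gam) (summable functions with sum
   zero, Gam acting by left translation) the H-fixed vectors vanish, while the
   bounded cocycle (x_0, x_1) |-> delta_{x_1} - delta_{x_0} is not a bounded
   coboundary, so inflation is not onto in degree 1. *)

From HB Require Import structures.
From mathcomp Require Import all_boot all_order all_algebra.
From mathcomp Require Import all_classical all_reals all_analysis.
From mathcomp Require Import Rstruct Rstruct_topology.
From mathcomp Require Import zify lra.
Import Order.TTheory GRing.Theory Num.Theory numFieldNormedType.Exports.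
Set Implicit Arguments.
Unset Strict Implicit.
Unset Printing Implicit Defensive.
Local Open Scope ring_scope.
Local Open Scope classical_set_scope.

(* Averages over the tuples of points of a finite nonempty family (e t)_{t : I}
   of elements of G; with I enumerating a finite subgroup H, [avg] is the mean
   over H^k used to project cochains onto H-invariant ones. *)
Section Averaging.
Variables (G : groupType) (V : normedModType RR) (I : finType) (e : I -> G).

Definition avg k (F : ('I_k -> G) -> V) : V :=
  ((#|I|%:R ^+ k)^-1 : RR) *: \sum_(t : {ffun 'I_k -> I}) F (fun i => e (t i)).

Lemma avg_ext k (F F' : ('I_k -> G) -> V) :
  (forall t : {ffun 'I_k -> I}, F (fun i => e (t i)) = F' (fun i => e (t i))) ->
  avg F = avg F'.
Proof. by move=> eF; congr (_ *: _); apply: eq_bigr => t _; rewrite eF. Qed.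

Lemma avgZ k r (F : ('I_k -> G) -> V) : avg (fun h => r *: F h) = r *: avg F.
Proof. by rewrite /avg -scaler_sumr !scalerA mulrC. Qed.

Lemma avgB k (F F' : ('I_k -> G) -> V) :
  avg (fun h => F h - F' h) = avg F - avg F'.
Proof. by rewrite /avg sumrB scalerBr. Qed.

Lemma avg_sum k N (F : 'I_N -> ('I_k -> G) -> V) :
  avg (fun h => \sum_(i < N) F i h) = \sum_(i < N) avg (F i).
Proof. by rewrite /avg exchange_big scaler_sumr. Qed.

Hypothesis I_gt0 : (0 < #|I|)%N.

Lemma avg_denom_neq0 k : (#|I|%:R ^+ k : RR) != 0.
Proof. by rewrite expf_neq0 // pnatr_eq0 -lt0n. Qed.

Lemma avg_const k (v : V) : avg (fun _ : 'I_k -> G => v) = v.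
Proof.
rewrite /avg sumr_const card_ffun !card_ord -scaler_nat scalerA natrX.
by rewrite mulVf ?avg_denom_neq0 // scale1r.
Qed.

Lemma avg_norm_le k (F : ('I_k -> G) -> V) B :
  (forall h, `|F h| <= B) -> `|avg F| <= B.
Proof.
move=> FB; rewrite /avg normrZ ger0_norm ?invr_ge0 ?exprn_ge0 //.
rewrite ler_pdivrMl ?exprn_gt0 ?ltr0n //.
apply: (le_trans (ler_norm_sum _ _ _)).
apply: (@le_trans _ _ (\sum_(t : {ffun 'I_k -> I}) B)); first by apply: ler_sum => t _; apply: FB.
by rewrite sumr_const card_ffun !card_ord -natrX mulr_natl.
Qed.

(* Averaging a function that ignores the i-th coordinate: the i-th average
   is trivial, so the face map commutes with averaging. *)
Lemma avg_face n (i : 'I_n.+2) (F : ('I_n.+1 -> G) -> V) :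
  avg (fun h => F (face i h)) = avg F.
Proof.
pose split_at (p : I * {ffun 'I_n.+1 -> I}) : {ffun 'I_n.+2 -> I} :=
  [ffun j => if unlift i j is Some j' then p.2 j' else p.1].
have split_bij : bijective split_at.
  exists (fun t : {ffun 'I_n.+2 -> I} => (t i, [ffun j => t (lift i j)])).
    move=> [b s] /=; rewrite ffunE unlift_none; congr (_, _).
    by apply/ffunP => j; rewrite !ffunE liftK.
  move=> t; apply/ffunP => j; rewrite ffunE /=.
  by case: unliftP => [j' ->|->]; rewrite ?ffunE.
rewrite /avg (reindex split_at) /=; last exact: onW_bij.
rewrite -(pair_big xpredT xpredT
  (fun b s => F (face i (fun j => e (split_at (b, s) j))))) /=.
have drop_i b s : F (face i (fun j => e (split_at (b, s) j))) = F (fun j => e (s j)).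
  by congr F; apply: boolp.funext => j; rewrite /face ffunE liftK.
under eq_bigr do under eq_bigr do rewrite drop_i.
rewrite sumr_const -scaler_nat scalerA; congr (_ *: _).
by rewrite exprS invfM mulrAC mulVf ?mul1r // pnatr_eq0 -lt0n.
Qed.

Lemma avg_translate k (F : ('I_k -> G) -> V) (h' : 'I_k -> G) (sig : 'I_k -> I -> I) :
  (forall i, injective (sig i)) -> (forall i b, e (sig i b) = h' i * e b)%g ->
  avg (fun h => F (fun i => h' i * h i)%g) = avg F.
Proof.
move=> sig_inj sigE.
pose Sig (t : {ffun 'I_k -> I}) : {ffun 'I_k -> I} := [ffun i => sig i (t i)].
have Sig_inj : injective Sig.
  move=> t1 t2 /ffunP eqS; apply/ffunP => i.
  by have := eqS i; rewrite !ffunE => /sig_inj.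
rewrite /avg [in RHS](reindex_inj Sig_inj); congr (_ *: _); apply: eq_bigr => t _.
by congr F; apply: boolp.funext => i; rewrite ffunE sigE.
Qed.

End Averaging.

Section NormedAction.
Variables (G : groupType) (V : normedModType RR) (a : G -> V -> V).
Hypothesis ha : normed_action a.

Lemma actM g h v : a (g * h)%g v = a g (a h v). Proof. by case: ha. Qed.

Lemma act_lin g r u v : a g (r *: u + v) = r *: a g u + a g v.
Proof. by case: ha. Qed.

Lemma act0 g : a g 0 = 0.
Proof. by have := act_lin g (-1) 0 0; rewrite scaler0 addr0 scaleN1r addNr. Qed.

Lemma actD g u v : a g (u + v) = a g u + a g v.
Proof. by have := act_lin g 1 u v; rewrite !scale1r. Qed.

Lemma actZ g r u : a g (r *: u) = r *: a g u.
Proof. by have := act_lin g r u 0; rewrite !addr0 act0 addr0. Qed.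

Lemma act_sum g (J : Type) (r : seq J) (P : pred J) (F : J -> V) :
  a g (\sum_(j <- r | P j) F j) = \sum_(j <- r | P j) a g (F j).
Proof. exact: (big_morph (a g) (actD g) (act0 g)). Qed.

Lemma act_avg g (I : finType) (e : I -> G) k (F : ('I_k -> G) -> V) :
  a g (avg e F) = avg e (fun h => a g (F h)).
Proof. by rewrite /avg actZ act_sum. Qed.

End NormedAction.

Section Homomorphism.
Variables (Gam K : groupType) (phi : Gam -> K).
Hypothesis phi_morph : {morph phi : x y / (x * y)%g}.

Lemma phi1 : phi 1%g = 1%g.
Proof. by apply: (mulgI (phi 1%g)); rewrite -phi_morph !mulg1. Qed.

Lemma phiV g : phi g^-1%g = (phi g)^-1%g.
Proof. by apply: (mulIg (phi g)); rewrite -phi_morph !mulVg phi1. Qed.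

Lemma phi_eq_ker g g' : phi g = phi g' -> phi (g^-1 * g')%g = 1%g.
Proof. by move=> eq_g; rewrite phi_morph phiV eq_g mulVg. Qed.

End Homomorphism.

Section SupNorm.
Variables (G : groupType) (V : normedModType RR).

Lemma supnorm_ge n (f : cochain G V n) x : bounded_cochain f -> `|f x| <= supnorm f.
Proof.
move=> [M fM]; apply: sup_upper_bound; last by exists x.
by split; [exists `|f x|, x | exists M => r [y _ <-]].
Qed.

Lemma supnorm_le n (f : cochain G V n) B : (forall x, `|f x| <= B) -> supnorm f <= B.
Proof.
move=> fB; apply: ge_sup; first by exists `|f (fun=> 1%g)|, (fun=> 1%g).
by move=> r [y _ <-].
Qed.

Lemma supnorm_ge0 n (f : cochain G V n) : bounded_cochain f -> 0 <= supnorm f.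
Proof. by move=> fb; apply: le_trans (supnorm_ge (fun=> 1%g) fb). Qed.

End SupNorm.

Lemma Bb_zero (G : groupType) (V : normedModType RR) (a : G -> V -> V) (S : set V)
    n (f : cochain G V n) :
  (forall g, a g 0 = 0) -> S 0 -> (forall x, f x = 0) -> Bb a S n f.
Proof.
move=> a0 S0 f0; case: n f f0 => [|m] f f0 //=.
exists (fun _ => 0); split; first split.
- by exists 0 => x; rewrite normr0.
- by move=> g x; rewrite a0.
- by [].
by move=> x; rewrite f0 /coboundary big1 // => i _; rewrite scaler0.
Qed.

Lemma face_edge (G : groupType) (x : 'I_2 -> G) (i : 'I_2) :
  face i x = (fun _ => x (inord (bump i 0))).
Proof.
apply: boolp.funext => j; rewrite /face (ord1 j); congr x; apply: val_inj => /=.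
by rewrite inordK //; rewrite /bump; case: (i <= 0)%N; lia.
Qed.

Lemma cocycle0_const (G : groupType) (V : normedModType RR) (c : cochain G V 0) :
  (forall y, coboundary c y = 0) -> forall x y, c x = c y.
Proof.
move=> c_coc x y.
pose xy : 'I_2 -> G := fun k => if nat_of_ord k == 0%N then x ord0 else y ord0.
have const1 (z : 'I_1 -> G) : (fun=> z ord0) = z.
  by apply: boolp.funext => j; rewrite (ord1 j).
have := c_coc xy; rewrite /coboundary big_ord_recr big_ord1 /= !face_edge /xy /bump.
rewrite !inordK //= !const1 expr0 expr1 scale1r scaleN1r => /eqP.
by rewrite subr_eq0 => /eqP.
Qed.

Definition representative_norms (G : groupType) (V : normedModType RR)
    (a : G -> V -> V) (S : set V) n (f : cochain G V n) : set RR :=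
  [set supnorm f' | f' in [set f' | Zb a S n f' /\ Bb a S n (fun x => f' x - f x)]].

Lemma representative_norms_lbound (G : groupType) (V : normedModType RR)
    (a : G -> V -> V) (S : set V) n (f : cochain G V n) :
  has_lbound (representative_norms a S f).
Proof. by exists 0 => r [f' [[[f'b _ _] _] _] <-]; apply: supnorm_ge0. Qed.

Lemma representative_norms_self (G : groupType) (V : normedModType RR)
    (a : G -> V -> V) (S : set V) n (f : cochain G V n) :
  (forall g, a g 0 = 0) -> S 0 -> Zb a S n f -> representative_norms a S f (supnorm f).
Proof.
by move=> a0 S0 fZ; exists f => //; split => //; apply: Bb_zero => // x; rewrite subrr.
Qed.

Lemma inf_le_dominated (A B : set RR) : has_lbound A -> nonempty B ->
  (forall b, B b -> exists2 x, A x & x <= b) -> inf A <= inf B.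
Proof.
move=> lbA B0 domB; apply: lb_le_inf => // b /domB [x Ax xb].
exact: le_trans (ge_inf lbA Ax) xb.
Qed.

(* For tuples z, h of length m+1 and j <= m, the
   (m+1)-simplex (z_0 h_0, .., z_j h_j, z_j, .., z_m) of the prism spanned by z
   and z h; its faces are either faces of neighbouring prism simplices or the
   "mixed" tuples (x_0 h_0, .., x_{j-1} h_{j-1}, x_j, .., x_n) interpolating
   between x and x h. *)
Section Prism.
Variable G : groupType.

Definition nat_tuple n (z : 'I_n.+1 -> G) (k : nat) : G := z (inord k).

Definition prism_simplex m (j : nat) (z h : 'I_m.+1 -> G) : 'I_m.+2 -> G :=
  fun k => if (k <= j)%N then (nat_tuple z k * nat_tuple h k)%g
           else nat_tuple z k.-1.

Definition mixed_tuple n (j : nat) (x h : 'I_n.+1 -> G) : 'I_n.+1 -> G :=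
  fun k => if (k < j)%N then (x k * h k)%g else x k.

Lemma nat_tupleE n (z : 'I_n.+1 -> G) (o : 'I_n.+1) : z o = nat_tuple z o.
Proof. by rewrite /nat_tuple inord_val. Qed.

Lemma nat_tuple_face n (i : 'I_n.+2) (x : 'I_n.+2 -> G) k : (k <= n)%N ->
  nat_tuple (face i x) k = nat_tuple x (bump i k).
Proof.
move=> kn; rewrite /nat_tuple /face; congr x; apply: val_inj => /=.
by rewrite inordK ?inordK //; rewrite /bump; lia.
Qed.

Lemma mixed_tuple0 n (x h : 'I_n.+1 -> G) : mixed_tuple 0 x h = x.
Proof. by apply: boolp.funext. Qed.

Lemma mixed_tupleN n (x h : 'I_n.+1 -> G) :
  mixed_tuple n.+1 x h = (fun k => x k * h k)%g.
Proof. by apply: boolp.funext => k; rewrite /mixed_tuple ltn_ord. Qed.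

Variable m : nat.
Implicit Types (x h : 'I_m.+2 -> G).

Ltac index_cases :=
  repeat (case: ifP => ?); rewrite ?add1n ?add0n;
  first [ reflexivity | (congr (_ * _)%g; congr nat_tuple; lia)
        | congr nat_tuple; lia | lia ].

Lemma face_prism_diag x h j : (j <= m.+1)%N ->
  face (inord j) (prism_simplex j x h) = mixed_tuple j x h.
Proof.
move=> jm; apply: boolp.funext => k.
rewrite /face /prism_simplex /mixed_tuple /= inordK; last by lia.
rewrite [x k]nat_tupleE [h k]nat_tupleE /bump; index_cases.
Qed.

Lemma face_prism_diagS x h j : (j <= m.+1)%N ->
  face (inord j.+1) (prism_simplex j x h) = mixed_tuple j.+1 x h.
Proof.
move=> jm; apply: boolp.funext => k.
rewrite /face /prism_simplex /mixed_tuple /= inordK; last by lia.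
rewrite [x k]nat_tupleE [h k]nat_tupleE /bump; index_cases.
Qed.

Lemma face_prism_lt x h i j : (i < j)%N -> (j <= m.+1)%N ->
  face (inord i) (prism_simplex j x h) =
  prism_simplex j.-1 (face (inord i) x) (face (inord i) h).
Proof.
move=> ij jm; apply: boolp.funext => k; rewrite [LHS]/face /prism_simplex /=.
have kk := ltn_ord k; have i1 : (i < m.+2)%N by lia.
have i2 : (i < m.+3)%N by lia.
case: (leqP k j.-1) => kj; rewrite ?nat_tuple_face; try lia;
  rewrite !inordK // /bump; index_cases.
Qed.

Lemma face_prism_gt x h i j : (j.+1 < i)%N -> (i <= m.+2)%N ->
  face (inord i) (prism_simplex j x h) =
  prism_simplex j (face (inord i.-1) x) (face (inord i.-1) h).
Proof.
move=> ij im; apply: boolp.funext => k; rewrite [LHS]/face /prism_simplex /=.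
have kk := ltn_ord k; have i1 : (i.-1 < m.+2)%N by lia.
have i2 : (i < m.+3)%N by lia.
case: (leqP k j) => kj; rewrite ?nat_tuple_face; try lia;
  rewrite !inordK // /bump; index_cases.
Qed.

End Prism.

Section DoubleSums.
Variable V : zmodType.

Lemma sum_indicator n j (X : V) : (j < n)%N ->
  \sum_(0 <= i < n) (if i == j then X else 0) = X.
Proof.
elim: n => [//|n IH] jn; rewrite big_nat_recr //=.
case: (ltnP j n) => jn'; first by rewrite IH // ifN ?addr0 //; apply/eqP; lia.
have -> : j = n by lia.
rewrite eqxx big1_seq ?add0r // => i; rewrite mem_index_iota => /andP[_ ilt].
by rewrite ifN //; apply/eqP; lia.
Qed.

Lemma sum_if_opp (P : pred nat) (F : nat -> V) n :
  \sum_(0 <= i < n) (if P i then - F i else 0) =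
  - \sum_(0 <= i < n) (if P i then F i else 0).
Proof. by rewrite -sumrN; apply: eq_bigr => i _; case: ifP; rewrite ?oppr0. Qed.

Lemma sum_below_diag m (T : nat -> nat -> V) :
  \sum_(0 <= j < m.+2) \sum_(0 <= i < m.+3) (if (i < j)%N then T i j.-1 else 0) =
  \sum_(0 <= i < m.+2) \sum_(0 <= j < m.+1) (if (i <= j)%N then T i j else 0).
Proof.
rewrite big_nat_recl // [X in X + _]big1 ?add0r // exchange_big big_nat_recr //=.
rewrite [X in _ + X]big1_seq ?addr0; last first.
  by move=> j; rewrite mem_index_iota => /andP[_ jl]; rewrite ifN //; lia.
by apply: eq_big_nat => i _; apply: eq_big_nat.
Qed.

Lemma sum_above_diag m (T : nat -> nat -> V) :
  \sum_(0 <= j < m.+2) \sum_(0 <= i < m.+3) (if (j.+1 < i)%N then T i.-1 j else 0) =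
  \sum_(0 <= i < m.+2) \sum_(0 <= j < m.+1) (if (j < i)%N then T i j else 0).
Proof.
rewrite big_nat_recr //= [X in _ + X]big1_seq ?addr0; last first.
  by move=> i; rewrite mem_index_iota => /andP[_ il]; rewrite ifN //; lia.
under eq_bigr do rewrite big_nat_recl //= add0r.
by rewrite exchange_big; apply: eq_big_nat => i _; apply: eq_big_nat.
Qed.

End DoubleSums.

Lemma signS n : ((-1) ^+ n.+1 : RR) = - (-1) ^+ n.
Proof. by rewrite exprS mulN1r. Qed.

(* The prism identity: for a cocycle c, the alternating sum over the faces of
   the prism chain is c x - c (x h); this makes the averaged prism operator a
   homotopy between the identity and the kernel average. *)
Section PrismIdentity.
Variables (G : groupType) (V : normedModType RR) (m : nat) (c : cochain G V m.+1).
Variables (x h : 'I_m.+2 -> G).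

Definition prism_term (i j : nat) : V := ((-1) ^+ (i + j) : RR) *:
  c (prism_simplex j (face (inord i : 'I_m.+2) x) (face (inord i) h)).

Definition mixed_value (j : nat) : V := c (mixed_tuple j x h).

Lemma face_prism_expansion j i : (j < m.+2)%N -> (i < m.+3)%N ->
  ((-1) ^+ (i + j) : RR) *: c (face (inord i) (prism_simplex j x h)) =
  (if (i < j)%N then - prism_term i j.-1 else 0) +
  (if i == j then mixed_value j else 0) +
  (if i == j.+1 then - mixed_value j.+1 else 0) +
  (if (j.+1 < i)%N then - prism_term i.-1 j else 0).
Proof.
move=> jm im; case: (ltnP i j) => ij.
  rewrite ifN; last by apply/eqP; lia.
  rewrite ifN; last by apply/eqP; lia.
  rewrite ifN; last by lia.
  rewrite !addr0 face_prism_lt; try lia.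
  rewrite /prism_term -scaleNr; congr (_ *: _).
  have -> : (i + j = (i + j.-1).+1)%N by lia.
  by rewrite signS.
rewrite add0r; case: (ltnP j.+1 i) => ji.
  rewrite ifN; last by apply/eqP; lia.
  rewrite ifN; last by apply/eqP; lia.
  rewrite !add0r face_prism_gt; try lia.
  rewrite /prism_term -scaleNr; congr (_ *: _).
  have -> : (i + j = (i.-1 + j).+1)%N by lia.
  by rewrite signS.
rewrite addr0; case: (eqVneq i j) => [->|ij'].
  rewrite ifN; last by apply/eqP; lia.
  rewrite addr0 face_prism_diag; last by lia.
  by rewrite addnn -mul2n exprM sqrrN !expr1n scale1r.
have -> : i = j.+1 by lia.
rewrite eqxx add0r face_prism_diagS; last by lia.
have -> : (j.+1 + j = (j + j).+1)%N by lia.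
by rewrite signS addnn -mul2n exprM sqrrN !expr1n scaleN1r.
Qed.

Hypothesis c_cocycle : forall y, coboundary c y = 0.

Lemma prism_identity :
  \sum_(i < m.+2) ((-1) ^+ i : RR) *:
     (\sum_(j < m.+1) ((-1) ^+ j : RR) *:
        c (prism_simplex j (face i x) (face i h)))
  = c x - c (fun k => x k * h k)%g.
Proof.
set S1 := \sum_(0 <= j < m.+2) \sum_(0 <= i < m.+3)
  (if (i < j)%N then prism_term i j.-1 else 0).
set S2 := \sum_(0 <= j < m.+2) \sum_(0 <= i < m.+3)
  (if (j.+1 < i)%N then prism_term i.-1 j else 0).
set tel := \sum_(0 <= j < m.+2) (mixed_value j - mixed_value j.+1).
have lhsE : \sum_(i < m.+2) ((-1) ^+ i : RR) *:
    (\sum_(j < m.+1) ((-1) ^+ j : RR) *: c (prism_simplex j (face i x) (face i h)))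
    = S1 + S2.
  rewrite /S1 /S2 sum_below_diag sum_above_diag -big_split big_mkord.
  apply: eq_bigr => i _; rewrite -big_split scaler_sumr big_mkord.
  apply: eq_bigr => j _ /=; rewrite scalerA -exprD /prism_term inord_val.
  by case: (leqP i j); rewrite ?addr0 ?add0r.
(* the faces of the prism simplices sum to zero since c is a cocycle *)
have faces0 : - S1 + tel - S2 = 0.
  have cob0 : \sum_(0 <= j < m.+2) \sum_(0 <= i < m.+3)
      ((-1) ^+ (i + j) : RR) *: c (face (inord i) (prism_simplex j x h)) = 0.
    apply: big1 => j _.
    transitivity (((-1) ^+ j : RR) *: coboundary c (prism_simplex j x h)).
      rewrite /coboundary scaler_sumr big_mkord.
      by apply: eq_bigr => i _; rewrite scalerA -exprD inord_val addnC.
    by rewrite c_cocycle scaler0.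
  rewrite -[RHS]cob0 /S1 /S2 -!sumrN -!big_split /=.
  apply: eq_big_nat => j /andP[_ jm].
  under [RHS]eq_big_nat => i /andP[_ im] do rewrite face_prism_expansion //.
  rewrite !big_split /= sum_indicator; last by lia.
  rewrite (sum_indicator (j := j.+1)); last by lia.
  by rewrite !(sum_if_opp (fun i => (i < j)%N)) !(sum_if_opp (fun i => (j.+1 < i)%N)) !addrA.
have telE : tel = c x - c (fun k => x k * h k)%g.
  rewrite /tel -[LHS]opprK -sumrN.
  under eq_bigr do rewrite opprB.
  by rewrite telescope_sumr // opprB /mixed_value mixed_tuple0 mixed_tupleN.
rewrite lhsE -telE; apply/eqP; rewrite eq_sym -subr_eq0 -faces0.
by rewrite opprD addrA [- S1 + tel]addrC.
Qed.

End PrismIdentity.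

(* Finite kernel. *)
Section FiniteKernel.
Variables (Gam K : groupType) (phi : Gam -> K).
Hypothesis phi_morph : {morph phi : x y / (x * y)%g}.
Variable s : K -> Gam.
Hypothesis sK : forall k, phi (s k) = k.
Variable hs : seq Gam.
Hypothesis hsP : forall g, g \in hs <-> phi g = 1%g.
Variables (V : normedModType RR) (a : Gam -> V -> V).
Hypothesis ha : normed_action a.

Local Notation H := (seq_sub hs).
Local Notation kavg := (@avg Gam V H val).

Lemma ker_gt0 : (0 < #|{: H}|)%N.
Proof.
have one_in : (1%g : Gam) \in hs by apply/hsP; exact: phi1.
by apply/card_gt0P; exists (SeqSub one_in).
Qed.

Lemma ker_val (t : H) : phi (val t) = 1%g.
Proof. by apply/hsP; exact: ssvalP. Qed.

Definition kernel_avg n (f : cochain Gam V n) : cochain Gam V n :=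
  fun x => kavg (fun h => f (fun i => x i * h i)%g).

Lemma kernel_avg_coboundary n (f : cochain Gam V n) x :
  coboundary (kernel_avg f) x = kernel_avg (coboundary f) x.
Proof.
rewrite /coboundary /kernel_avg avg_sum; apply: eq_bigr => i _; rewrite avgZ.
by congr (_ *: _); rewrite -(avg_face val ker_gt0 i (fun h' => f (fun j => face i x j * h' j)%g)).
Qed.

Lemma kernel_avg_inv n (f : cochain Gam V n) :
  invariant_cochain a f -> invariant_cochain a (kernel_avg f).
Proof.
move=> f_inv g x; rewrite /kernel_avg act_avg //; apply: avg_ext => t.
rewrite -(f_inv g (fun i => x i * val (t i))%g); congr (a g (f _)).
by apply: boolp.funext => i; rewrite mulgA.
Qed.

Lemma kernel_avg_norm n (f : cochain Gam V n) M :
  (forall x, `|f x| <= M) -> forall x, `|kernel_avg f x| <= M.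
Proof. by move=> fM x; apply: (avg_norm_le val ker_gt0) => h; apply: fM. Qed.

Lemma kernel_avg_transl n (f : cochain Gam V n) x (h' : 'I_n.+1 -> Gam) :
  (forall i, phi (h' i) = 1%g) -> kernel_avg f (fun i => x i * h' i)%g = kernel_avg f x.
Proof.
move=> h'_ker; rewrite /kernel_avg.
have shift_in i (b : H) : (h' i * val b)%g \in hs.
  by apply/hsP; rewrite phi_morph h'_ker ker_val mulg1.
transitivity (kavg (fun h => (fun h0 : 'I_n.+1 -> Gam => f (fun i => x i * h0 i)%g)
                              (fun i => h' i * h i)%g)).
  by congr kavg; apply: boolp.funext => h; congr f; apply: boolp.funext => i; rewrite mulgA.
apply: (@avg_translate _ _ _ val _ _ _ (fun i b => insubd b (h' i * val b)%g)) => i.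
  by move=> b1 b2 /(congr1 val); rewrite !insubdK // => /mulgI /val_inj.
by move=> b; rewrite insubdK.
Qed.

Lemma kernel_avg_phi n (f : cochain Gam V n) x y :
  (forall i, phi (x i) = phi (y i)) -> kernel_avg f x = kernel_avg f y.
Proof.
move=> eq_xy; have -> : y = (fun i => x i * ((x i)^-1 * y i))%g.
  by apply: boolp.funext => i; rewrite mulVKg.
by rewrite kernel_avg_transl // => i; apply: phi_eq_ker.
Qed.

Lemma kernel_avg_inflation n (f : cochain K V n) x :
  kernel_avg (inflation phi f) x = inflation phi f x.
Proof.
rewrite /kernel_avg (avg_ext (F' := fun _ => inflation phi f x)) ?(avg_const val ker_gt0) //.
move=> t; rewrite /inflation; congr f; apply: boolp.funext => i.
by rewrite phi_morph ker_val mulg1.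
Qed.

Lemma kernel_avg_fixed n (f : cochain Gam V n) :
  invariant_cochain a f -> forall x, fixedH phi a (kernel_avg f x).
Proof.
move=> f_inv x h h_ker.
rewrite -[in RHS](kernel_avg_inv f_inv h); congr (a h _).
by apply: kernel_avg_phi => i; rewrite phi_morph phiV // h_ker invg1 mul1g.
Qed.


Definition descend n (f : cochain Gam V n) : cochain K V n :=
  fun k => kernel_avg f (fun i => s (k i)).

Lemma inflation_descend n (f : cochain Gam V n) x :
  inflation phi (descend f) x = kernel_avg f x.
Proof. by apply: kernel_avg_phi => i; rewrite sK. Qed.

Lemma descend_inflation n (f : cochain K V n) : descend (inflation phi f) = f.
Proof.
apply: boolp.funext => k; rewrite /descend kernel_avg_inflation /inflation.
by congr f; apply: boolp.funext => i; exact: sK.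
Qed.

Lemma descend_coboundary n (f : cochain Gam V n) k :
  coboundary (descend f) k = descend (coboundary f) k.
Proof. exact: kernel_avg_coboundary. Qed.

Lemma descendB n (f g : cochain Gam V n) :
  descend (fun x => f x - g x) = (fun k => descend f k - descend g k).
Proof. by apply: boolp.funext => k; rewrite /descend /kernel_avg avgB. Qed.

Lemma descend0 n : descend (fun _ : 'I_n.+1 -> Gam => 0) = (fun _ => 0).
Proof. by apply: boolp.funext => k; rewrite /descend /kernel_avg (avg_const val ker_gt0). Qed.

Lemma actK_fixed (v : V) g : fixedH phi a v -> actK phi a (phi g) v = a g v.
Proof.
move=> v_fixed; rewrite /actK; set g0 := xget _ _.
have g0E : phi g0 = phi g.
  by apply: (@xgetPex _ 1%g [set g' | phi g' = phi g]); exists g.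
by rewrite -(mulVKg g g0) actM // v_fixed //; apply: phi_eq_ker.
Qed.

Lemma descend_Cb n (f : cochain Gam V n) :
  Cb a setT n f -> Cb (actK phi a) (fixedH phi a) n (descend f).
Proof.
move=> [[M fM] f_inv _]; split.
- by exists M => k; apply: kernel_avg_norm.
- move=> k' k; rewrite -{1}(sK k') actK_fixed; last exact: kernel_avg_fixed.
  rewrite /descend -[RHS](kernel_avg_inv f_inv (s k')).
  by congr (a _ _); apply: kernel_avg_phi => i; rewrite phi_morph phiV // !sK.
- by move=> k; apply: kernel_avg_fixed.
Qed.

Lemma inflation_Cb n (f : cochain K V n) :
  Cb (actK phi a) (fixedH phi a) n f -> Cb a setT n (inflation phi f).
Proof.
move=> [[M fM] f_inv f_fixed]; split => //.
- by exists M => x; apply: fM.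
- move=> g x; rewrite /inflation -actK_fixed // -[RHS](f_inv (phi g)).
  by congr (actK _ _ _ (f _)); apply: boolp.funext => i; rewrite phi_morph phiV.
Qed.

Lemma descend_Zb n (f : cochain Gam V n) :
  Zb a setT n f -> Zb (actK phi a) (fixedH phi a) n (descend f).
Proof.
move=> [fC f_coc]; split; first exact: descend_Cb.
by move=> k; rewrite descend_coboundary (_ : coboundary f = fun _ => 0)
  ?descend0 //; apply: boolp.funext.
Qed.

Lemma inflation_Zb n (f : cochain K V n) :
  Zb (actK phi a) (fixedH phi a) n f -> Zb a setT n (inflation phi f).
Proof. by move=> [fC f_coc]; split=> [|x]; [exact: inflation_Cb | exact: (f_coc (fun i => phi (x i)))]. Qed.

Lemma descend_Bb n (f : cochain Gam V n) :
  Bb a setT n f -> Bb (actK phi a) (fixedH phi a) n (descend f).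
Proof.
case: n f => [|m] f /= f_cob.
  by move=> k; rewrite (_ : f = fun _ => 0) ?descend0 //; apply: boolp.funext.
have [b [bC fE]] := f_cob; exists (descend b); split; first exact: descend_Cb.
by move=> k; rewrite descend_coboundary (_ : f = coboundary b) //; apply: boolp.funext.
Qed.

Lemma inflation_Bb n (f : cochain K V n) :
  Bb (actK phi a) (fixedH phi a) n f -> Bb a setT n (inflation phi f).
Proof.
case: n f => [|m] f /= f_cob; first by move=> x; apply: f_cob.
have [b [bC fE]] := f_cob; exists (inflation phi b); split; first exact: inflation_Cb.
by move=> x; apply: fE.
Qed.

(* The averaged prism operator: a contracting homotopy between the identity
   and the kernel average on cocycles. *)
Definition homotopy m (c : cochain Gam V m.+1) : cochain Gam V m :=
  fun z => kavg (fun h => \sum_(j < m.+1) ((-1) ^+ j : RR) *: c (prism_simplex j z h)).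

Lemma homotopy_Cb m (c : cochain Gam V m.+1) : Cb a setT m.+1 c -> Cb a setT m (homotopy c).
Proof.
move=> [[M cM] c_inv _]; split => //.
- exists (m.+1%:R * M) => z; apply: (avg_norm_le val ker_gt0) => h.
  apply: (le_trans (ler_norm_sum _ _ _)).
  apply: (@le_trans _ _ (\sum_(j < m.+1) M)); last by rewrite sumr_const card_ord mulr_natl.
  by apply: ler_sum => j _; rewrite normrZ normrX normrN normr1 expr1n mul1r.
- move=> g z; rewrite /homotopy act_avg //; apply: avg_ext => t.
  rewrite act_sum //; apply: eq_bigr => j _; rewrite actZ //; congr (_ *: _).
  rewrite -(c_inv g (prism_simplex j z (fun i => val (t i)))); congr (a g (c _)).
  apply: boolp.funext => k; rewrite /prism_simplex /nat_tuple.
  by case: ifP => _; rewrite ?mulgA.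
Qed.

Lemma homotopy_prism m (c : cochain Gam V m.+1) : (forall y, coboundary c y = 0) ->
  forall x, coboundary (homotopy c) x = c x - kernel_avg c x.
Proof.
move=> c_coc x; rewrite /coboundary /homotopy.
transitivity (kavg (fun h => \sum_(i < m.+2) ((-1) ^+ i : RR) *:
    (\sum_(j < m.+1) ((-1) ^+ j : RR) *: c (prism_simplex j (face i x) (face i h))))).
  rewrite avg_sum; apply: eq_bigr => i _; rewrite avgZ; congr (_ *: _).
  by rewrite -(avg_face val ker_gt0 i (fun h' => \sum_(j < m.+1) ((-1) ^+ j : RR) *:
                                          c (prism_simplex j (face i x) h'))).
rewrite (avg_ext (F' := fun h => c x - c (fun k => x k * h k)%g)); last first.
  by move=> t; apply: prism_identity.
by rewrite avgB (avg_const val ker_gt0).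
Qed.

Lemma cohomologous_kernel_avg n (c : cochain Gam V n) :
  Zb a setT n c -> Bb a setT n (fun x => c x - kernel_avg c x).
Proof.
case: n c => [|m] c [cC c_coc] /=.
  move=> x; rewrite /kernel_avg (avg_ext (F' := fun _ => c x)) ?(avg_const val ker_gt0) ?subrr //.
  by move=> t; apply: cocycle0_const.
by exists (homotopy c); split; [exact: homotopy_Cb | move=> x; rewrite homotopy_prism].
Qed.

(* injectivity: descend the primitive; surjectivity: c ~ P c = inflation (descend c) *)
Theorem inflation_iso_finite n : inflation_iso phi a n.
Proof.
split=> [f fZ /descend_Bb|c cZ].
  by rewrite descend_inflation.
exists (descend c); first exact: descend_Zb.
by under eq_fun do rewrite inflation_descend; apply: cohomologous_kernel_avg.
Qed.

(* inflation preserves the sup norm, since phi is onto *)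
Lemma supnorm_inflation n (f : cochain K V n) : supnorm (inflation phi f) = supnorm f.
Proof.
rewrite /supnorm; congr sup; apply/seteqP; split => r /= [y _ <-].
  by exists (fun i => phi (y i)).
exists (fun i => s (y i)) => //; rewrite /inflation; congr (`| f _ |).
by apply: boolp.funext => i; rewrite sK.
Qed.

Lemma supnorm_descend n (f : cochain Gam V n) :
  bounded_cochain f -> supnorm (descend f) <= supnorm f.
Proof. by move=> fb; apply: supnorm_le => k; apply: kernel_avg_norm => x; apply: supnorm_ge. Qed.

(* Inflation maps representatives to representatives without changing their
   norm, and descent maps them back without increasing it. *)
Theorem inflation_isometric_finite n : inflation_isometric phi a n.
Proof.
have a0 g : a g 0 = 0 := act0 ha g.
have aK0 k : actK phi a k 0 = 0 := act0 ha _.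
have fixed0 : fixedH phi a 0 by move=> h _; exact: act0 ha h.
move=> f fZ; apply/le_anti/andP; split; apply: inf_le_dominated.
- exact: representative_norms_lbound.
- by exists (supnorm f); apply: representative_norms_self.
- move=> _ [f'' [f''Z f''B] <-]; exists (supnorm (inflation phi f'')).
    by exists (inflation phi f''); split; [exact: inflation_Zb | exact: (inflation_Bb f''B)].
  by rewrite supnorm_inflation.
- exact: representative_norms_lbound.
- by exists (supnorm (inflation phi f)); apply: representative_norms_self => //; exact: inflation_Zb.
- move=> _ [f' [f'Z f'B] <-]; exists (supnorm (descend f')).
    exists (descend f'); split; first exact: descend_Zb.
    by rewrite -[X in fun _ => _ - X _](descend_inflation f) -descendB; exact: descend_Bb.
  by apply: supnorm_descend; case: f'Z => [[]].
Qed.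

End FiniteKernel.

Lemma cvg_sum_seq (R : realType) (I U : Type) (G : set_system U) (FG : Filter G) (s : seq I)
    (f : I -> U -> R) (l : I -> R) :
  (forall x, f x @ G --> l x) -> (fun u => \sum_(x <- s) f x u) @ G --> \sum_(x <- s) l x.
Proof.
move=> f_cvg; elim: s => [|x s IH].
  by under eq_fun do rewrite big_nil; rewrite big_nil; exact: cvg_cst.
have -> : (fun u => \sum_(y <- x :: s) f y u) = f x + (fun u => \sum_(y <- s) f y u).
  by apply: boolp.funext => u; rewrite big_cons.
by rewrite big_cons; exact: (cvgD (f_cvg x) IH).
Qed.

Lemma cvg_dist (R : realType) (U : Type) (G : set_system U) (FG : Filter G)
    (g : U -> R) (c l : R) :
  g @ G --> l -> (fun u => `|c - g u|) @ G --> `|c - l|.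
Proof. by move=> g_cvg; apply: cvg_norm; apply: cvgB => //; exact: cvg_cst. Qed.

(* The Banach space l^1_0(T) of absolutely summable real functions on a set T
   whose (unconditional) sum is zero, with the l^1 norm. *)
Section L1Zero.
Variable T : choiceType.

Definition summable (u : T -> RR) : Prop :=
  exists M : RR, forall s : seq T, uniq s -> \sum_(x <- s) `|u x| <= M.

(* the finite partial sums converge to 0 along the net of finite subsets *)
Definition sums_to_zero (u : T -> RR) : Prop :=
  forall e : RR, 0 < e -> exists s0 : seq T, forall t : seq T, uniq t ->
    {subset s0 <= t} -> `|\sum_(x <- t) u x| <= e.

Definition l1_zero_pred : {pred T -> RR^o} := fun u => `[< summable u /\ sums_to_zero u >].

Record l1_zero := L1Zero { l1_fun :> T -> RR^o; l1_funP : l1_fun \in l1_zero_pred }.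

HB.instance Definition _ := [isSub for l1_fun].
HB.instance Definition _ := [Choice of l1_zero by <:].

Lemma l1_zero_predP (u : T -> RR^o) :
  reflect (summable u /\ sums_to_zero u) (u \in l1_zero_pred).
Proof. exact: asboolP. Qed.

Lemma l1_zero_submod_closed : submod_closed l1_zero_pred.
Proof.
split.
  apply/l1_zero_predP; split.
    by exists 0 => s _; rewrite big1 // => x _; rewrite normr0.
  by move=> e e0; exists [::] => t _ _; rewrite big1 ?normr0 ?ltW.
move=> r u v /l1_zero_predP[[Mu uM] u0] /l1_zero_predP[[Mv vM] v0].
apply/l1_zero_predP; split.
  exists (`|r| * Mu + Mv) => s s_uniq.
  apply: (@le_trans _ _ (\sum_(x <- s) (`|r| * `|u x| + `|v x|))).
    by apply: ler_sum => x _; rewrite -normrM; exact: ler_normD.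
  by rewrite big_split /= -mulr_sumr lerD ?ler_wpM2l ?uM ?vM.
move=> e e0; have e2 : 0 < e / 2 by rewrite divr_gt0.
have e3 : 0 < e / 2 / (`|r| + 1) by rewrite divr_gt0 // ltr_wpDl.
have [s1 s1P] := u0 _ e3; have [s2 s2P] := v0 _ e2.
exists (s1 ++ s2) => t t_uniq sub_t.
have sub1 : {subset s1 <= t} by move=> x xs; apply: sub_t; rewrite mem_cat xs.
have sub2 : {subset s2 <= t} by move=> x xs; apply: sub_t; rewrite mem_cat xs orbT.
rewrite (_ : \sum_(x <- t) _ = r * \sum_(x <- t) u x + \sum_(x <- t) v x); last first.
  by rewrite big_split /= mulr_sumr.
apply: (le_trans (ler_normD _ _)); rewrite [e]splitr lerD ?s2P // normrM.
apply: (@le_trans _ _ (`|r| * (e / 2 / (`|r| + 1)))); first by rewrite ler_wpM2l ?s1P.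
rewrite mulrA ler_pdivrMr ?ltr_wpDl // mulrC ler_wpM2l ?divr_ge0 ?ltW //.
by rewrite ltrDl.
Qed.

HB.instance Definition _ :=
  GRing.isSubmodClosed.Build RR (T -> RR^o) l1_zero_pred l1_zero_submod_closed.
HB.instance Definition _ := [SubChoice_isSubLmodule of l1_zero by <:].

Lemma l1_zeroP (u : l1_zero) : summable u /\ sums_to_zero u.
Proof. exact/l1_zero_predP/l1_funP. Qed.

Lemma l1_zero_addE (u v : l1_zero) x : (u + v) x = u x + v x. Proof. by []. Qed.
Lemma l1_zero_scaleE (r : RR) (u : l1_zero) x : (r *: u) x = r * u x. Proof. by []. Qed.
Lemma l1_zero0E x : (0 : l1_zero) x = 0. Proof. by []. Qed.

Lemma l1_zero_eq (u v : l1_zero) : (forall x, u x = v x) -> u = v.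
Proof. by move=> eq_uv; apply: val_inj; apply: boolp.funext. Qed.

Definition l1_norm (u : l1_zero) : RR :=
  sup [set \sum_(x <- s) `|u x| | s in [set s : seq T | uniq s]].

Lemma l1_norm_ge (u : l1_zero) s : uniq s -> \sum_(x <- s) `|u x| <= l1_norm u.
Proof.
move=> s_uniq; have [[M uM] _] := l1_zeroP u.
apply: sup_upper_bound; last by exists s.
by split; [exists (\sum_(x <- s) `|u x|), s | exists M => r [s' ? <-]; apply: uM].
Qed.

Lemma l1_norm_le (u : l1_zero) B :
  (forall s, uniq s -> \sum_(x <- s) `|u x| <= B) -> l1_norm u <= B.
Proof.
move=> uB; apply: ge_sup; first by exists (\sum_(x <- [::]) `|u x|), [::].
by move=> r [s s_uniq <-]; apply: uB.
Qed.

Lemma l1_norm_pt (u : l1_zero) x : `|u x| <= l1_norm u.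
Proof. by have := l1_norm_ge u (s := [:: x]) isT; rewrite big_seq1. Qed.

Lemma l1_normD (u v : l1_zero) : l1_norm (u + v) <= l1_norm u + l1_norm v.
Proof.
apply: l1_norm_le => s s_uniq.
apply: (@le_trans _ _ (\sum_(x <- s) (`|u x| + `|v x|))).
  by apply: ler_sum => x _; exact: ler_normD.
by rewrite big_split /= lerD ?l1_norm_ge.
Qed.

Lemma l1_normZ_le (r : RR) (u : l1_zero) : l1_norm (r *: u) <= `|r| * l1_norm u.
Proof.
apply: l1_norm_le => s s_uniq; rewrite (eq_bigr _ (fun x _ => normrM r (u x))).
by rewrite -mulr_sumr ler_wpM2l ?l1_norm_ge.
Qed.

Lemma l1_normZ (r : RR) (u : l1_zero) : l1_norm (r *: u) = `|r| * l1_norm u.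
Proof.
apply/le_anti/andP; split; first exact: l1_normZ_le.
have [->|r0] := eqVneq r 0.
  by rewrite normr0 mul0r; apply: le_trans (l1_norm_ge _ (s := [::]) isT); rewrite big_nil.
have := l1_normZ_le r^-1 (r *: u); rewrite scalerA mulVf // scale1r.
by rewrite normrV ?unitfE // ler_pdivlMl ?normr_gt0.
Qed.

Lemma l1_norm_eq0 (u : l1_zero) : l1_norm u = 0 -> u = 0.
Proof.
move=> u0; apply: l1_zero_eq => x; apply/normr0_eq0/eqP.
by rewrite eq_le normr_ge0 andbT -u0 l1_norm_pt.
Qed.

HB.instance Definition _ :=
  Lmodule_isNormed.Build RR l1_zero l1_normD l1_normZ l1_norm_eq0.

Lemma normE (u : l1_zero) : `|u| = l1_norm u. Proof. by []. Qed.

(* Completeness: a Cauchy filter converges coordinatewise, and the l^1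
   estimates pass to the coordinatewise limit. *)
Section Completeness.
Variable F : set_system l1_zero.
Hypotheses (F_proper : ProperFilter F) (F_cauchy : cauchy F).

Let F_balls : forall e : RR, 0 < e -> exists z : l1_zero, F (ball z e).
Proof. exact/cauchyP. Qed.

Let coord (x : T) (u : l1_zero) : RR := u x.

Lemma coord_cvg x : cvg (coord x @ F).
Proof.
apply: R_complete; apply/cauchyP => e e0; have [z Fz] := F_balls e0.
exists (z x : RR); suff : F (fun u : l1_zero => ball (z x : RR) e (u x)) by [].
apply: filterS Fz => u; rewrite -!ball_normE /ball_ /= => zu.
by apply: le_lt_trans zu; rewrite normE; exact: (l1_norm_pt (z - u)).
Qed.

Definition coord_limit (x : T) : RR^o := lim (coord x @ F).

Lemma dist_coord_limit (z : l1_zero) e : F (ball z e) ->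
  forall s, uniq s -> \sum_(x <- s) `|(z x : RR) - coord_limit x| <= e.
Proof.
move=> Fz s s_uniq.
apply: (@cvgr_to_le _ F F_proper _ (fun u : l1_zero => \sum_(x <- s) `|(z x : RR) - u x|)).
  by apply: cvg_sum_seq => x; apply: cvg_dist; exact: coord_cvg.

apply: filterS Fz => u; rewrite -ball_normE /ball_ /= => zu.
apply/ltW/(le_lt_trans _ zu); rewrite normE; exact: (l1_norm_ge (z - u)).
Qed.

Lemma coord_limit_in : coord_limit \in l1_zero_pred.
Proof.
apply/l1_zero_predP; split.
  have [z Fz] := F_balls ltr01; exists (l1_norm z + 1) => s s_uniq.
  apply: (@le_trans _ _ (\sum_(x <- s) (`|z x| + `|(z x : RR) - coord_limit x|))).
    by apply: ler_sum => x _; rewrite -{1}(subKr (z x : RR) (coord_limit x)) ler_normB.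
  by rewrite big_split /= lerD ?l1_norm_ge ?(dist_coord_limit Fz).
move=> e e0; have e2 : 0 < e / 2 by rewrite divr_gt0.
have [z Fz] := F_balls e2; have [_ z0] := l1_zeroP z; have [s0 s0P] := z0 _ e2.
exists s0 => t t_uniq sub_t.
have -> : \sum_(x <- t) coord_limit x =
          \sum_(x <- t) (z x : RR) - \sum_(x <- t) ((z x : RR) - coord_limit x).
  by rewrite -sumrB; apply: eq_bigr => x _; rewrite opprB addrC subrK.
apply: (le_trans (ler_normB _ _)); rewrite [e]splitr lerD ?s0P //.
by apply: (le_trans (ler_norm_sum _ _ _)); exact: dist_coord_limit.
Qed.

Lemma l1_zero_cvg : cvg F.
Proof.
pose L : l1_zero := L1Zero coord_limit_in.
apply: (@cvgP _ _ L); apply/(cvg_ballP (F := F) id) => e e0.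
have e2 : 0 < e / 2 by rewrite divr_gt0.
have [z Fz] := F_balls e2.
have dist_zL : `|L - z| <= e / 2.
  rewrite normE; apply: l1_norm_le => s s_uniq.
  under eq_bigr do rewrite distrC; exact: dist_coord_limit.
apply: filterS Fz => u; rewrite -!ball_normE /ball_ /= => zu.
by rewrite -(subrKA z) (le_lt_trans (ler_normD _ _)) // [e]splitr ler_ltD.
Qed.

End Completeness.

Lemma l1_zero_complete (F : set_system l1_zero) : ProperFilter F -> cauchy F -> cvg F.
Proof. exact: l1_zero_cvg. Qed.

HB.instance Definition _ := Uniform_isComplete.Build l1_zero l1_zero_complete.

End L1Zero.

Section Translation.
Variable Gam : groupType.
Local Notation L := (l1_zero Gam).

Lemma uniq_translate (g : Gam) (t : seq Gam) :
  uniq (map (fun z => g^-1 * z)%g t) = uniq t.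
Proof. by apply: map_inj_uniq; exact: mulgI. Qed.

Lemma translate_in g (u : L) : (fun z => u (g^-1 * z)%g) \in @l1_zero_pred Gam.
Proof.
have [[M uM] u0] := l1_zeroP u; apply/l1_zero_predP; split.
  by exists M => s s_uniq; rewrite -(big_map _ xpredT (fun y => `|u y|)) uM ?uniq_translate.
move=> e e0; have [s0 s0P] := u0 e e0.
exists (map (fun y => g * y)%g s0) => t t_uniq sub_t.
rewrite -(big_map _ xpredT (fun y => u y)) s0P ?uniq_translate //.
move=> y ys; apply/mapP; exists (g * y)%g; last by rewrite mulKg.
by apply: sub_t; apply: map_f.
Qed.

Definition translate (g : Gam) (u : L) : L := L1Zero (translate_in g u).

Lemma translateE g (u : L) z : translate g u z = u (g^-1 * z)%g. Proof. by []. Qed.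

Lemma translate_norm_le g (u : L) : `|translate g u| <= `|u|.
Proof.
rewrite !normE; apply: l1_norm_le => s s_uniq.
by rewrite -(big_map _ xpredT (fun y => `|u y|)) l1_norm_ge ?uniq_translate.
Qed.

Lemma translate_normed : normed_action translate.
Proof.
split.
- by move=> v; apply: l1_zero_eq => z; rewrite translateE invg1 mul1g.
- by move=> g h v; apply: l1_zero_eq => z; rewrite !translateE invgM mulgA.
- by move=> g r u v; apply: l1_zero_eq.
move=> g v; apply/le_anti; rewrite translate_norm_le /=.
have gK : translate g^-1 (translate g v) = v.
  by apply: l1_zero_eq => z; rewrite !translateE invgK mulKg.
by rewrite -{1}gK translate_norm_le.
Qed.

Definition delta (y : Gam) : Gam -> RR^o := fun z => if z == y then 1 else 0.

Lemma sum_delta (t : seq Gam) y : uniq t -> \sum_(z <- t) delta y z = (y \in t)%:R.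
Proof.
elim: t => [|z t IH]; first by rewrite big_nil.
rewrite cons_uniq => /andP[zt t_uniq]; rewrite big_cons IH // in_cons /delta.
by have [<-|] := eqVneq z y; rewrite ?(negbTE zt) ?addr0 ?add0r.
Qed.

Lemma delta_translate g y z : delta y (g^-1 * z)%g = delta (g * y)%g z.
Proof.
rewrite /delta; congr (if _ then _ else _).
by apply/eqP/eqP => [<-|->]; [rewrite mulVKg | rewrite mulKg].
Qed.

Lemma sum_norm_delta_diff y x s : uniq s ->
  \sum_(z <- s) `|delta y z - delta x z| <= 2.
Proof.
move=> s_uniq; apply: (@le_trans _ _ (\sum_(z <- s) (delta y z + delta x z))).
  apply: ler_sum => z _; apply: (le_trans (ler_normB _ _)).
  by rewrite /delta; case: ifP; case: ifP; rewrite ?normr1 ?normr0.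
rewrite big_split /= !sum_delta // -[2]/(1 + 1).
by apply: lerD; case: (_ \in s); rewrite ?ler01 ?lexx.
Qed.

Lemma delta_diff_in y x : (fun z => delta y z - delta x z) \in @l1_zero_pred Gam.
Proof.
apply/l1_zero_predP; split; first by exists 2 => s; exact: sum_norm_delta_diff.
move=> e e0; exists [:: y; x] => t t_uniq sub_t.
by rewrite sumrB !sum_delta // !sub_t ?inE ?eqxx ?orbT // subrr normr0 ltW.
Qed.

Definition delta_diff y x : L := L1Zero (delta_diff_in y x).

Lemma delta_diffE y x z : delta_diff y x z = delta y z - delta x z. Proof. by []. Qed.

Lemma delta_diff_norm y x : `|delta_diff y x| <= 2.
Proof. by rewrite normE; apply: l1_norm_le => s; exact: sum_norm_delta_diff. Qed.

Lemma translate_delta_diff g y x :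
  translate g (delta_diff y x) = delta_diff (g * y)%g (g * x)%g.
Proof. by apply: l1_zero_eq => z; rewrite translateE !delta_diffE !delta_translate. Qed.

End Translation.

Lemma sum_ge_const (U : eqType) (s : seq U) (F : U -> RR) c :
  (forall u, u \in s -> c <= F u) -> (size s)%:R * c <= \sum_(u <- s) F u.
Proof.
elim: s => [|u s IH] Fc; first by rewrite big_nil mul0r.
rewrite big_cons /= -addn1 natrD mulrDl mul1r addrC lerD ?Fc ?mem_head //.
by apply: IH => u' u's; apply: Fc; rewrite inE u's orbT.
Qed.

Lemma summable_infinite_gt (U T : choiceType) (A : set U) (f : U -> T) (v : T -> RR) c :
  summable v -> infinite_set A -> injective f -> 0 < c ->
  (forall u, A u -> c <= `|v (f u)|) -> False.
Proof.
move=> [M vM] A_inf f_inj c_gt0 vc.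
have M_ge0 : 0 <= M by have := vM [::] isT; rewrite big_nil.
have := archi_boundP (divr_ge0 M_ge0 (ltW c_gt0)); set N := Num.bound _ => MN.
have [B BA cardB] := infinite_set_fset N A_inf.
have := vM (map f (finmap.enum_fset B)).
rewrite map_inj_uniq // finmap.fset_uniq big_map => /(_ isT) sumM.
have sum_ge := sum_ge_const (fun u uB => vc u (BA u uB)).
have : N%:R * c <= M.
  apply: le_trans sumM; apply: le_trans sum_ge; by rewrite ler_pM2r // ler_nat.
by rewrite -ler_pdivlMr // leNgt MN.
Qed.

(* Infinite kernel.  The H-fixed vectors of l^1_0(Gam) vanish, so the image of
   inflation in H^1_b(Gam; l^1_0(Gam)) is zero; but the class of the cocycle
   (x_0, x_1) |-> delta_{x_1} - delta_{x_0} is not: a bounded invariant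
   primitive would be g |-> g.w with w = delta_1 + const, which is not in
   l^1_0(Gam). *)
Section InfiniteKernel.
Variables (Gam K : groupType) (phi : Gam -> K).
Hypothesis H_infinite : infinite_set (kerH phi).
Local Notation L := (l1_zero Gam).

(* an H-fixed summable function is constant on the infinite H-orbits, hence 0 *)
Lemma fixed_l1_zero (v : L) : fixedH phi (@translate Gam) v -> v = 0.
Proof.
move=> v_fixed; apply: l1_zero_eq => z; have [//|vz] := eqVneq (v z : RR) 0.
have [v_sum _] := l1_zeroP v; exfalso.
apply: (@summable_infinite_gt _ _ _ (fun h => h^-1 * z)%g _ `|v z| v_sum H_infinite).
- by move=> h1 h2 /mulIg /invg_inj.
- by rewrite normr_gt0.
by move=> h h_ker; rewrite -translateE v_fixed.
Qed.

Lemma not_const_plus_delta (w : L) (k : RR) :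
  (forall z, w z = k + delta 1%g z) -> False.
Proof.
move=> wE; have [w_sum w0] := l1_zeroP w; have [k0|k0] := eqVneq k 0.
  have [s0 s0P] := w0 (1 / 2) ltac:(by rewrite divr_gt0).
  have sub_s0 : {subset s0 <= undup (1%g :: s0)}.
    by move=> x xs; rewrite mem_undup inE xs orbT.
  have := s0P _ (undup_uniq (1%g :: s0)) sub_s0.
  under eq_bigr do rewrite wE k0 add0r.
  rewrite sum_delta ?undup_uniq // mem_undup mem_head /= normr1.
  lra.
apply: (@summable_infinite_gt _ _ (kerH phi `\ 1%g) id _ `|k| w_sum).
- move=> A_fin; apply: H_infinite; apply: (sub_finite_set (B := (kerH phi `\ 1%g) `|` [set 1%g])).
    move=> h h_ker; have [->|h1] := eqVneq h 1%g; first by right.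
    by left; split => // /eqP; rewrite (negbTE h1).
  by rewrite finite_setU; split => //; exact: finite_set1.
- by [].
- by rewrite normr_gt0.
by move=> h [_ /eqP h1]; rewrite wE /delta ifN ?addr0.
Qed.

Definition dirac_cocycle : cochain Gam L 1 :=
  fun x => delta_diff (x (inord 1)) (x (inord 0)).

Lemma face_triangle (y : 'I_3 -> Gam) (i : 'I_3) k : (k <= 1)%N ->
  face i y (inord k) = y (inord (bump i k)).
Proof.
move=> k1; rewrite /face; congr y; apply: val_inj => /=.
by rewrite !inordK //; rewrite /bump; case: (i <= k)%N; lia.
Qed.

Lemma dirac_cocycle_Zb : Zb (@translate Gam) setT 1 dirac_cocycle.
Proof.
split; first split.
- by exists 2 => x; apply: delta_diff_norm.
- by move=> g x; rewrite /dirac_cocycle translate_delta_diff !mulVKg.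
- by [].
move=> y; apply: l1_zero_eq => z.
rewrite /coboundary !big_ord_recr big_ord0 !l1_zero_addE !l1_zero_scaleE l1_zero0E.
rewrite /dirac_cocycle !delta_diffE !face_triangle // /bump /= !addn0 !add0n.
rewrite expr0 expr1 sqrrN expr1n.
lra.
Qed.

(* a bounded invariant primitive b of the Dirac cocycle, with w := b(1),
   satisfies delta_g - delta_1 = g.w - w, i.e. w = (w(1) - 1) + delta_1 *)
Theorem inflation_not_surjective : ~ inflation_iso phi (@translate Gam) 1.
Proof.
move=> [_ surj]; have [f [[_ _ f_fixed] _] [b [[_ b_inv _] fE]]] := surj _ dirac_cocycle_Zb.
pose w := b (fun _ => 1%g).
have b_const g : b (fun _ => g) = translate g w.
  by rewrite /w -(b_inv g (fun _ => g)); congr (translate g (b _)); apply: boolp.funext => i; rewrite mulVg.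
apply: (@not_const_plus_delta w (w 1%g - 1)) => z.
pose x : 'I_2 -> Gam := fun k => if nat_of_ord k == 0%N then 1%g else z.
have := congr1 (fun u : L => (u z : RR)) (fE x).
rewrite /inflation (fixed_l1_zero (f_fixed _)) subr0 /coboundary big_ord_recr big_ord1.
rewrite l1_zero_addE !l1_zero_scaleE !face_edge !b_const /dirac_cocycle delta_diffE.
rewrite !translateE /x /bump /= !inordK //= expr0 expr1 mulVg invg1 mul1g.
by rewrite {1}/delta eqxx; lra.
Qed.

End InfiniteKernel.

Lemma inflation_finite_kernel (Gam K : groupType) (phi : Gam -> K)
    (phi_morph : {morph phi : x y / (x * y)%g})
    (phi_surj : forall k : K, exists g : Gam, phi g = k)
    (H_finite : finite_set (kerH phi))
    (V : normedModType RR) (a : Gam -> V -> V) (ha : normed_action a) (n : nat) :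
  inflation_iso phi a n /\ inflation_isometric phi a n.
Proof.
pose s (k : K) := xget 1%g [set g | phi g = k].
have sK k : phi (s k) = k by apply: (@xgetPex _ 1%g [set g | phi g = k]); exact: phi_surj.
pose hs : seq Gam := finmap.enum_fset (fset_set (kerH phi)).
have hsP g : g \in hs <-> phi g = 1%g by rewrite /hs (in_fset_set H_finite) in_setE.
split; first exact: (inflation_iso_finite phi_morph sK hsP ha).
exact: (inflation_isometric_finite phi_morph sK hsP ha).
Qed.

Theorem theoremB (Gam K : groupType) (phi : Gam -> K)
    (phi_morph : {morph phi : x y / (x * y)%g})
    (phi_surj : forall k : K, exists g : Gam, phi g = k) :
  ((forall (V : normedModType RR) (a : Gam -> V -> V), normed_action a ->
      forall n : nat,
        inflation_iso phi a n /\ inflation_isometric phi a n)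
   <-> finite_set (kerH phi)) /\
  ((forall (V : completeNormedModType RR) (a : Gam -> V -> V), normed_action a ->
      inflation_iso phi a 1)
   <-> finite_set (kerH phi)).
Proof.
split; split.
- move=> iso_all; apply: boolp.contrapT => H_infinite.
  have [iso1 _] := iso_all _ _ (@translate_normed Gam) 1%N.
  exact: (inflation_not_surjective H_infinite iso1).
- by move=> H_finite V a ha n; apply: inflation_finite_kernel.
- move=> iso1; apply: boolp.contrapT => H_infinite.
  exact: (inflation_not_surjective H_infinite (iso1 _ _ (@translate_normed Gam))).
- by move=> H_finite V a ha; have [] := inflation_finite_kernel phi_morph phi_surj H_finite ha 1.
Qed.
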